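(* Let $p$ be a prime with $p\equiv5\pmod6$, $m$ odd, and $\Theta\in\mathrm{Aut}(R_k)$ with order dividing $p^s$. Then $x^2-x+1$ and $x^2+x+1$ are irreducible over $R_k$, $x^{6p^s}-1=(x-1)^{p^s}(x+1)^{p^s}(x^2-x+1)^{p^s}(x^2+x+1)^{p^s}$, and \[ \frac{R_k[x;\Theta]}{\langle x^{6p^s}-1\rangle}\cong\frac{R_k[x;\Theta]}{\langle (x-1)^{p^s}\rangle}\oplus\frac{R_k[x;\Theta]}{\langle (x+1)^{p^s}\rangle}\oplus\frac{R_k[x;\Theta]}{\langle (x^2-x+1)^{p^s}\rangle}\oplus\frac{R_k[x;\Theta]}{\langle (x^2+x+1)^{p^s}\rangle}. \] Consequently every skew $\Theta$-cyclic code of length $6p^s$ over $R_k$ is $\mathcal C_1\oplus\mathcal C_2\oplus\mathcal C_3\oplus\mathcal C_4$ with $\mathcal C_1$ a skew $\Theta$-cyclic code of length $p^s$, $\mathcal C_2$ a skew $\Theta$-negacyclic code of length $p^s$, and $\mathcal C_3,\mathcal C_4$ skew $(x^{2p^s}-x^{p^s}+1,\Theta)$- and $(x^{2p^s}+x^{p^s}+1,\Theta)$-polycyclic codes of length $2p^s$.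
   Context: $R_k=\mathbb{F}_{p^m}[u]/\langle u^k\rangle$; $R_k[x;\Theta]$ is the skew polynomial ring with $xa=\Theta(a)x$. Skew $(\lambda,\Theta)$-constacyclic code of length $N$: left ideal of $R_k[x;\Theta]/\langle x^N-\lambda\rangle$ ($\lambda=1$ cyclic, $\lambda=-1$ negacyclic). For a central monic $g$ of degree $N$, a skew $(g,\Theta)$-polycyclic code of length $N$ is a left ideal of $R_k[x;\Theta]/\langle g\rangle$. Note $(x^2\mp x+1)^{p^s}=x^{2p^s}\mp x^{p^s}+1$. *)

From HB Require Import structures.
From mathcomp Require Import all_boot all_order all_algebra.
Set Implicit Arguments. Unset Strict Implicit. Unset Printing Implicit Defensive.
Import GRing.Theory.
Local Open Scope ring_scope.

Section Skew.
Variable R : comNzRingType.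
Variable theta : R -> R.

(* Skew multiplication in R[x; theta] on coefficient sequences:
   (a x^i)(b x^j) = a theta^i(b) x^(i+j), i.e. x a = theta(a) x. *)
Definition skew_mul (f g : {poly R}) : {poly R} :=
  \sum_(i < size f) \sum_(j < size g) (f`_i * iter i theta g`_j) *: 'X^(i + j).

(* Remainder of the (left) skew division of f by a monic g:
   f = q * g + r (skew product) with size r < size g. *)
Fixpoint skew_mod_aux (fuel : nat) (f g : {poly R}) : {poly R} :=
  match fuel with
  | 0%N => f
  | fuel'.+1 =>
      if (size f < size g)%N then f
      else skew_mod_aux fuel'
             (f - skew_mul (lead_coef f *: 'X^(size f - size g)) g) g
  end.

Definition skew_mod (f g : {poly R}) : {poly R} := skew_mod_aux (size f) f g.

Definition skew_central (g : {poly R}) : Prop :=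
  forall f : {poly R}, skew_mul f g = skew_mul g f.

(* Elements of R[x;theta]/<g> are represented by their reduced
   representatives (size < size g); the product is skew_mod (skew_mul a b) g.
   C is a left ideal of R[x;theta]/<g>. *)
Definition skew_left_ideal (g : {poly R}) (C : {poly R} -> Prop) : Prop :=
  [/\ forall c, C c -> (size c < size g)%N,
      C 0,
      forall c d, C c -> C d -> C (c + d),
      forall c, C c -> C (- c)
    & forall (a c : {poly R}), (size a < size g)%N -> C c -> C (skew_mod (skew_mul a c) g)].

Definition skew_polycyclic_code (g : {poly R}) (N : nat) (C : {poly R} -> Prop)
  : Prop :=
  [/\ g \is monic, size g = N.+1, skew_central g & skew_left_ideal g C].

Definition skew_constacyclic_code (lambda : R) (N : nat) (C : {poly R} -> Prop)
  : Prop := skew_polycyclic_code ('X^N - lambda%:P) N C.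

Definition skew_cyclic_code N C := skew_constacyclic_code 1 N C.
Definition skew_negacyclic_code N C := skew_constacyclic_code (-1) N C.

(* The canonical map R[x;theta]/<G> -> (+)_i R[x;theta]/<gs i>,
   a |-> (a mod gs i)_i, is a ring isomorphism. *)
Definition skew_crt_iso (n : nat) (G : {poly R}) (gs : 'I_n -> {poly R}) : Prop :=
  [/\
      forall (a : {poly R}) i, skew_mod (skew_mod a G) (gs i) = skew_mod a (gs i),
      forall a b : {poly R}, (size a < size G)%N -> (size b < size G)%N ->
        (forall i, skew_mod a (gs i) = skew_mod b (gs i)) -> a = b,
      forall bs : 'I_n -> {poly R}, (forall i, (size (bs i) < size (gs i))%N) ->
        exists2 a : {poly R}, (size a < size G)%N & forall i, skew_mod a (gs i) = bs i,
      (forall (a b : {poly R}) i, skew_mod (a + b) (gs i) = skew_mod a (gs i) + skew_mod b (gs i))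
      /\ (forall i, skew_mod 1 (gs i) = 1)
    &
      forall (a b : {poly R}) i,
        skew_mod (skew_mod (skew_mul a b) G) (gs i)
        = skew_mod (skew_mul (skew_mod a (gs i)) (skew_mod b (gs i))) (gs i)].

End Skew.

Definition poly_unit (R : comNzRingType) (f : {poly R}) : Prop :=
  exists g : {poly R}, f * g = 1.

Definition poly_irreducible (R : comNzRingType) (f : {poly R}) : Prop :=
  [/\ f != 0, ~ poly_unit f &
      forall g h : {poly R}, f = g * h -> poly_unit g \/ poly_unit h].

Definition four_factors (R : comNzRingType) (q : nat) (i : 'I_4) : {poly R} :=
  nth 0 [:: ('X - 1) ^+ q; ('X + 1) ^+ q;
            ('X^2 - 'X + 1) ^+ q; ('X^2 + 'X + 1) ^+ q] i.

(* Reduction modulo u maps R_k onto F_{p^m} with nilpotent kernel, so a polynomial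
   over R_k whose reduction is a nonzero constant is a unit; hence a quadratic is
   irreducible as soon as its reduction has no root, and x^2 -+ x + 1 has none because
   p^m = 5 (mod 6) leaves no primitive third or sixth root of unity in F_{p^m}.
   In characteristic p the Frobenius turns the four factors of x^(6p^s) - 1 into
   polynomials in y = x^(p^s) with integer coefficients, namely y - 1, y + 1,
   y^2 - y + 1 and y^2 + y + 1.  Since Theta^(p^s) = id they are central in
   R_k[x; Theta], and since 6 is invertible they are pairwise comaximal through an
   explicit Bezout identity.  The Chinese remainder theorem for central comaximal
   monic factors then yields the ring isomorphism, and a left ideal of the product
   is the product of its images. *)

From Pilot Require Import Defs.
From HB Require Import structures.
From mathcomp Require Import all_boot all_order all_algebra all_field zify ring.

Set Implicit Arguments.
Unset Strict Implicit.
Unset Printing Implicit Defensive.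
Import GRing.Theory.
Local Open Scope ring_scope.

(** * Skew polynomial arithmetic *)

Section SkewPolynomials.
Variables (R : comNzRingType) (Theta : {rmorphism R -> R}).
Implicit Types (a b c d f g h r : {poly R}) (x : R).

Definition theta_iter (i : nat) : R -> R := iter i Theta.

Fact theta_iter_is_zmod_morphism i : GRing.zmod_morphism (theta_iter i).
Proof. by elim: i => // i IH x y; rewrite /theta_iter /= -!/(theta_iter i _) IH rmorphB. Qed.

Fact theta_iter_is_monoid_morphism i : GRing.monoid_morphism (theta_iter i).
Proof.
elim: i => [|i [IH1 IHM]] //; split=> [|x y]; rewrite /theta_iter /= -!/(theta_iter i _).
  by rewrite IH1 rmorph1.
by rewrite IHM rmorphM.
Qed.

HB.instance Definition _ i := GRing.isZmodMorphism.Build R R (theta_iter i)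
  (theta_iter_is_zmod_morphism i).
HB.instance Definition _ i := GRing.isMonoidMorphism.Build R R (theta_iter i)
  (theta_iter_is_monoid_morphism i).

Lemma theta_iter_fixed i x : Theta x = x -> theta_iter i x = x.
Proof. by move=> fx; elim: i => //= i IH; rewrite /theta_iter /= -/(theta_iter i _) IH. Qed.

Definition skew_Xn_mul (i : nat) (g : {poly R}) := 'X^i * map_poly (theta_iter i) g.

Fact skew_Xn_mul_is_zmod_morphism i : GRing.zmod_morphism (skew_Xn_mul i).
Proof. by move=> f g; rewrite /skew_Xn_mul rmorphB mulrBr. Qed.

HB.instance Definition _ i := GRing.isZmodMorphism.Build {poly R} {poly R}
  (skew_Xn_mul i) (skew_Xn_mul_is_zmod_morphism i).

Lemma coef_skew_Xn_mul i g n :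
  (skew_Xn_mul i g)`_n = if (n < i)%N then 0 else theta_iter i g`_(n - i).
Proof. by rewrite coefXnM coef_map. Qed.

Lemma skew_Xn_mul0 g : skew_Xn_mul 0 g = g.
Proof. by apply/polyP=> n; rewrite coef_skew_Xn_mul subn0. Qed.

Lemma skew_Xn_mulS i g : skew_Xn_mul i.+1 g = skew_Xn_mul 1 (skew_Xn_mul i g).
Proof.
apply/polyP=> [[|n]]; rewrite !coef_skew_Xn_mul //= ltnS subn1 /=.
by case: ifP => _; rewrite ?rmorph0.
Qed.

Lemma skew_Xn_mulC i x g :
  skew_Xn_mul i (x%:P * g) = (theta_iter i x)%:P * skew_Xn_mul i g.
Proof.
apply/polyP=> n; rewrite coefCM !coef_skew_Xn_mul.
by case: ifP; rewrite ?mulr0 // coefCM rmorphM.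
Qed.

Local Notation smul := (skew_mul Theta).

Lemma skew_mulE f g : smul f g = \sum_(i < size f) (f`_i)%:P * skew_Xn_mul i g.
Proof.
apply: eq_bigr => i _; rewrite /skew_Xn_mul /map_poly poly_def !mulr_sumr.
by apply: eq_bigr => j _; rewrite -scalerAr -exprD mul_polyC scalerA.
Qed.

Lemma skew_mul_widen n f g : (size f <= n)%N ->
  smul f g = \sum_(i < n) (f`_i)%:P * skew_Xn_mul i g.
Proof.
move=> le_f_n; rewrite skew_mulE.
rewrite (big_ord_widen n (fun i => (f`_i)%:P * skew_Xn_mul i g) le_f_n) big_mkcond.
apply: eq_bigr => i _; case: ifP => // /negbT; rewrite -leqNgt => le_f_i.
by rewrite nth_default // mul0r.
Qed.

Fact skew_mul_is_zmod_morphism f : GRing.zmod_morphism (smul f).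
Proof.
by move=> g g'; rewrite !skew_mulE -sumrB; apply: eq_bigr => i _; rewrite raddfB mulrBr.
Qed.

HB.instance Definition _ f := GRing.isZmodMorphism.Build {poly R} {poly R}
  (smul f) (skew_mul_is_zmod_morphism f).

Lemma skew_mulBl f f' g : smul (f - f') g = smul f g - smul f' g.
Proof.
set n := maxn (size f) (size f').
have le_ff' : (size (f - f')%R <= n)%N by rewrite (leq_trans (size_polyD _ _)) ?size_polyN.
rewrite !(@skew_mul_widen n) ?leq_maxl ?leq_maxr // -sumrB.
by apply: eq_bigr => i _; rewrite coefB polyCB mulrBl.
Qed.

Lemma skew_mul0l g : smul 0 g = 0.
Proof. by rewrite skew_mulE size_poly0 big_ord0. Qed.

Lemma skew_mulNl f g : smul (- f) g = - smul f g.
Proof. by rewrite -sub0r skew_mulBl skew_mul0l sub0r. Qed.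

Lemma skew_mulDl f f' g : smul (f + f') g = smul f g + smul f' g.
Proof. by rewrite -{1}[f']opprK skew_mulBl skew_mulNl opprK. Qed.

Lemma skew_mul_suml I (r : seq I) (P : pred I) (F : I -> {poly R}) g :
  smul (\sum_(i <- r | P i) F i) g = \sum_(i <- r | P i) smul (F i) g.
Proof. exact: (big_morph (smul^~ g) (fun f f' => skew_mulDl f f' g) (skew_mul0l g)). Qed.

Lemma skew_mulCl x f g : smul (x%:P * f) g = x%:P * smul f g.
Proof.
rewrite (@skew_mul_widen (size f)); last by rewrite mul_polyC size_scale_leq.
by rewrite skew_mulE mulr_sumr; apply: eq_bigr => i _; rewrite coefCM polyCM mulrA.
Qed.

Lemma skew_mul1l g : smul 1 g = g.
Proof. by rewrite skew_mulE size_poly1 big_ord1 coefC mul1r skew_Xn_mul0. Qed.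

Lemma skew_mulXnl i g : smul 'X^i g = skew_Xn_mul i g.
Proof.
rewrite (@skew_mul_widen i.+1) ?size_polyXn // big_ord_recr /= big1.
  by rewrite add0r coefXn eqxx mul1r.
by move=> j _; rewrite coefXn ltn_eqF ?mul0r.
Qed.

Lemma skew_X_mulA g h : smul (skew_Xn_mul 1 g) h = skew_Xn_mul 1 (smul g h).
Proof.
rewrite (@skew_mul_widen (size g).+1); last first.
  apply/leq_sizeP => j lt_g_j; rewrite coef_skew_Xn_mul; case: j lt_g_j => //= j lt_g_j.
  by rewrite subn1 nth_default ?rmorph0.
rewrite big_ord_recl coef_skew_Xn_mul /= mul0r add0r skew_mulE raddf_sum.
apply: eq_bigr => j _; rewrite coef_skew_Xn_mul /bump leq0n add1n /= subn1 /=.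
by rewrite skew_Xn_mulC -skew_Xn_mulS.
Qed.

Lemma skew_Xn_mulA i g h : smul (skew_Xn_mul i g) h = skew_Xn_mul i (smul g h).
Proof.
elim: i g => [|i IH] g; first by rewrite !skew_Xn_mul0.
by rewrite skew_Xn_mulS skew_X_mulA IH -skew_Xn_mulS.
Qed.

Lemma skew_mulA f g h : smul (smul f g) h = smul f (smul g h).
Proof.
rewrite [smul f g]skew_mulE skew_mul_suml [RHS]skew_mulE.
by apply: eq_bigr => i _; rewrite skew_mulCl skew_Xn_mulA.
Qed.

(** * Division by a monic polynomial *)

Definition skew_rdvd g f := exists h, f = smul h g.

Lemma skew_rdvd0 g : skew_rdvd g 0.
Proof. by exists 0; rewrite skew_mul0l. Qed.

Lemma skew_rdvdB g f f' : skew_rdvd g f -> skew_rdvd g f' -> skew_rdvd g (f - f').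
Proof. by move=> [h ->] [h' ->]; exists (h - h'); rewrite skew_mulBl. Qed.

Lemma skew_rdvdN g f : skew_rdvd g f -> skew_rdvd g (- f).
Proof. by rewrite -sub0r; apply: skew_rdvdB (skew_rdvd0 g). Qed.

Lemma skew_rdvdD g f f' : skew_rdvd g f -> skew_rdvd g f' -> skew_rdvd g (f + f').
Proof. by move=> df /skew_rdvdN; rewrite -[f' in _ + f']opprK; apply: skew_rdvdB. Qed.

Lemma skew_rdvd_sum g I (r : seq I) (P : pred I) (F : I -> {poly R}) :
  (forall i, P i -> skew_rdvd g (F i)) -> skew_rdvd g (\sum_(i <- r | P i) F i).
Proof. by move=> dF; apply: big_ind => //; [apply: skew_rdvd0 | apply: skew_rdvdD]. Qed.

Lemma skew_rdvd_mull g a f : skew_rdvd g f -> skew_rdvd g (smul a f).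
Proof. by move=> [h ->]; exists (smul a h); rewrite skew_mulA. Qed.

Section SkewDivision.
Variable g : {poly R}.
Hypothesis g_monic : g \is monic.
Local Notation smod f := (skew_mod Theta f g).

Lemma size_monic_gt0 : (0 < size g)%N.
Proof. by rewrite size_poly_gt0 monic_neq0. Qed.

Lemma top_coef_monic : g`_(size g).-1 = 1.
Proof. exact: monicP. Qed.

Lemma size_skew_reduce f : (size g <= size f)%N ->
  (size (f - smul (lead_coef f *: 'X^(size f - size g)) g)%R < size f)%N.
Proof.
move=> le_g_f; set d := (size f - size g)%N.
have f_gt0 : (0 < size f)%N := leq_trans size_monic_gt0 le_g_f.
rewrite -mul_polyC skew_mulCl skew_mulXnl.
apply: leq_ltn_trans (_ : _ <= (size f).-1)%N _; last by rewrite prednK.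
apply/leq_sizeP => j le_j; rewrite coefB coefCM coef_skew_Xn_mul.
have le_dj : (d <= j)%N by rewrite /d; move: size_monic_gt0 le_j; lia.
rewrite ltnNge le_dj /=; case: (ltngtP j (size f).-1) => [|lt_j|->].
- by move: le_j; lia.
- rewrite !nth_default ?rmorph0 ?mulr0 ?subr0 //;
    by move: le_g_f lt_j f_gt0; rewrite /d; set a := size f; set b := size g; lia.
have -> : ((size f).-1 - d)%N = (size g).-1 by rewrite /d; move: le_g_f size_monic_gt0; lia.
by rewrite top_coef_monic rmorph1 mulr1 lead_coefE subrr.
Qed.

Lemma skew_mod_aux_spec n f : (size f < n + size g)%N ->
  (size (skew_mod_aux Theta n f g) < size g)%N /\ skew_rdvd g (f - skew_mod_aux Theta n f g).
Proof.
elim: n f => [|n IH] f /= lt_f; first by rewrite subrr; split=> //; apply: skew_rdvd0.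
case: ifP => [lt_fg | /negbT]; first by rewrite subrr; split=> //; apply: skew_rdvd0.
rewrite -leqNgt => /size_skew_reduce lt_f'.
have [lt_r d_r] := IH _ (leq_trans lt_f' lt_f).
split=> //; set f' := (_ - _)%R in lt_f' lt_r d_r *.
rewrite -[f](subrK f') -addrA; apply: skew_rdvdD => //.
by rewrite /f' opprB addrC subrK; eexists.
Qed.

Lemma skew_mod_spec f : (size (smod f) < size g)%N /\ skew_rdvd g (f - smod f).
Proof. by apply: skew_mod_aux_spec; rewrite -{1}[size f]addn0 ltn_add2l size_monic_gt0. Qed.

Lemma size_skew_mod f : (size (smod f) < size g)%N.
Proof. by case: (skew_mod_spec f). Qed.

Lemma skew_rdvd_sub_mod f : skew_rdvd g (f - smod f).
Proof. by case: (skew_mod_spec f). Qed.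

Lemma skew_rdvd_small r : skew_rdvd g r -> (size r < size g)%N -> r = 0.
Proof.
move=> [h ->] lt_r; apply: contraTeq lt_r => nz_hg; rewrite -leqNgt.
have [h0 | nz_h] := eqVneq h 0; first by rewrite h0 skew_mul0l eqxx in nz_hg.
have h_gt0 : (0 < size h)%N by rewrite size_poly_gt0.
set N := ((size h).-1 + (size g).-1)%N.
have coefN : (smul h g)`_N = lead_coef h.
  rewrite skew_mulE coef_sum -(prednK h_gt0) big_ord_recr /= big1.
    rewrite add0r coefCM coef_skew_Xn_mul ltnNge leq_addr /= addKn.
    by rewrite top_coef_monic rmorph1 mulr1 lead_coefE.
  move=> i _; rewrite coefCM coef_skew_Xn_mul; case: ifP => _; rewrite ?mulr0 //.
  rewrite [g`_ _]nth_default ?rmorph0 ?mulr0 //; move: (ltn_ord i) size_monic_gt0.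
  by rewrite /N; set a := size g; set b := size h; lia.
have : (N < size (smul h g))%N.
  by rewrite ltnNge; apply: contra nz_h => le_N; rewrite -lead_coef_eq0 -coefN nth_default.
by apply: leq_trans; rewrite /N; move: size_monic_gt0; lia.
Qed.

Lemma skew_modE f r : (size r < size g)%N -> skew_rdvd g (f - r) -> smod f = r.
Proof.
move=> lt_r d_fr; apply/eqP; rewrite -subr_eq0; apply/eqP; apply: skew_rdvd_small.
  have -> : smod f - r = (f - r) - (f - smod f) by ring.
  exact: skew_rdvdB d_fr (skew_rdvd_sub_mod f).
by rewrite (leq_ltn_trans (size_polyD _ _)) // size_polyN gtn_max size_skew_mod.
Qed.

Lemma skew_mod_small f : (size f < size g)%N -> smod f = f.
Proof. by move=> lt_f; apply: skew_modE; rewrite // subrr; apply: skew_rdvd0. Qed.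

Lemma skew_mod0 : smod 0 = 0.
Proof. by rewrite skew_mod_small ?size_poly0 ?size_monic_gt0. Qed.

Lemma eq_skew_mod a b : skew_rdvd g (a - b) -> smod a = smod b.
Proof.
move=> d_ab; apply: skew_modE; first exact: size_skew_mod.
by rewrite -(subrK b a) -addrA; apply: skew_rdvdD => //; apply: skew_rdvd_sub_mod.
Qed.

Lemma skew_rdvd_eq_mod a b : smod a = smod b -> skew_rdvd g (a - b).
Proof.
move=> eq_ab; have -> : a - b = (a - smod a) - (b - smod b) by rewrite eq_ab; ring.
by apply: skew_rdvdB; apply: skew_rdvd_sub_mod.
Qed.

Lemma skew_modB a b : smod (a - b) = smod a - smod b.
Proof.
apply: skew_modE.
  by rewrite (leq_ltn_trans (size_polyD _ _)) // size_polyN gtn_max !size_skew_mod.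
have -> : a - b - (smod a - smod b) = (a - smod a) - (b - smod b) by ring.
by apply: skew_rdvdB; apply: skew_rdvd_sub_mod.
Qed.

Lemma skew_modN a : smod (- a) = - smod a.
Proof. by rewrite -sub0r skew_modB skew_mod0 sub0r. Qed.

Lemma skew_modD a b : smod (a + b) = smod a + smod b.
Proof. by rewrite -{1}[b]opprK skew_modB skew_modN opprK. Qed.

Lemma skew_mod_sum I (r : seq I) (P : pred I) (F : I -> {poly R}) :
  smod (\sum_(i <- r | P i) F i) = \sum_(i <- r | P i) smod (F i).
Proof. exact: (big_morph (fun a => smod a) skew_modD skew_mod0). Qed.

Lemma skew_mod_mulmr a b : smod (smul a (smod b)) = smod (smul a b).
Proof.
apply: eq_skew_mod; rewrite -raddfB -opprB raddfN.
by apply/skew_rdvdN/skew_rdvd_mull; apply: skew_rdvd_sub_mod.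
Qed.
End SkewDivision.

(** * Central factors and the Chinese remainder theorem *)

Section CentralPolynomials.
Variable q : nat.
Hypothesis theta_iter_q : forall x, theta_iter q x = x.

Lemma theta_iter_dvd i x : (q %| i)%N -> theta_iter i x = x.
Proof.
move/divnK <-; rewrite /theta_iter iterM.
by elim: (i %/ q)%N => //= k ->; apply: theta_iter_q.
Qed.

(* As Theta^q = id, such polynomials are central in R[x; Theta], where multiplying
   by them on either side is the ordinary polynomial product. *)
Definition qcentral g :=
  (forall i, Theta g`_i = g`_i) /\ (forall i, ~~ (q %| i)%N -> g`_i = 0).

Lemma qcentralXn n : (q %| n)%N -> qcentral 'X^n.
Proof.
move=> dvd_qn; split=> i; rewrite coefXn; first by rewrite rmorph_nat.
by case: eqP => // ->; rewrite dvd_qn.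
Qed.

Lemma qcentral1 : qcentral 1.
Proof. by rewrite -(expr0 'X); apply: qcentralXn; rewrite dvdn0. Qed.

Lemma qcentralB f g : qcentral f -> qcentral g -> qcentral (f - g).
Proof.
move=> [fixf supf] [fixg supg]; split=> i; rewrite coefB ?rmorphB ?fixf ?fixg //.
by move=> ndvd_i; rewrite supf ?supg ?subr0.
Qed.

Lemma qcentralD f g : qcentral f -> qcentral g -> qcentral (f + g).
Proof.
move=> [fixf supf] [fixg supg]; split=> i; rewrite coefD ?rmorphD ?fixf ?fixg //.
by move=> ndvd_i; rewrite supf ?supg ?addr0.
Qed.

Lemma qcentralM f g : qcentral f -> qcentral g -> qcentral (f * g).
Proof.
move=> [fixf supf] [fixg supg]; split=> i; rewrite coefM.
  by rewrite rmorph_sum; apply: eq_bigr => j _; rewrite rmorphM fixf fixg.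
move=> ndvd_i; apply: big1 => j _.
have [dvd_j | /supf ->] := boolP (q %| j)%N; last by rewrite mul0r.
rewrite supg ?mulr0 //; apply: contra ndvd_i => dvd_ij.
by rewrite -(subnK (leq_ord j)) dvdn_add.
Qed.

Lemma qcentral_prod I (r : seq I) (P : pred I) (F : I -> {poly R}) :
  (forall i, P i -> qcentral (F i)) -> qcentral (\prod_(i <- r | P i) F i).
Proof. by move=> cF; apply: big_ind => //; [apply: qcentral1 | apply: qcentralM]. Qed.

Lemma skew_mul_qcentralr g : qcentral g -> forall h, smul h g = h * g.
Proof.
move=> [fixg _] h; rewrite skew_mulE -[h in RHS]coefK poly_def mulr_suml.
apply: eq_bigr => i _; rewrite -mul_polyC -mulrA; congr (_ * _).
apply/polyP=> n; rewrite coef_skew_Xn_mul coefXnM; case: ifP => // _.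
exact: theta_iter_fixed.
Qed.

Lemma skew_mul_qcentrall g : qcentral g -> forall h, smul g h = g * h.
Proof.
move=> [_ supg] h; rewrite skew_mulE -[g in RHS]coefK poly_def mulr_suml.
apply: eq_bigr => i _; rewrite -mul_polyC -mulrA.
have [dvd_qi | /supg ->] := boolP (q %| i)%N; last by rewrite !mul0r.
congr (_ * _); apply/polyP=> n; rewrite coef_skew_Xn_mul coefXnM; case: ifP => // _.
exact: theta_iter_dvd.
Qed.

Lemma skew_central_qcentral g : qcentral g -> skew_central Theta g.
Proof.
by move=> cg f; rewrite (skew_mul_qcentralr cg) (skew_mul_qcentrall cg) mulrC.
Qed.

Lemma skew_rdvd_qcentralE g : qcentral g -> forall f, skew_rdvd g f <-> exists h, f = h * g.
Proof. by move=> cg f; split=> -[h ->]; exists h; rewrite skew_mul_qcentralr. Qed.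

Lemma skew_rdvd_mulr g f b : qcentral g -> skew_rdvd g f -> skew_rdvd g (smul f b).
Proof.
move=> cg [h ->]; exists (smul h b).
by rewrite skew_mulA (skew_mul_qcentrall cg) mulrC -(skew_mul_qcentralr cg) -skew_mulA.
Qed.

Lemma skew_mod_mulml g : g \is monic -> qcentral g -> forall a b,
  skew_mod Theta (smul (skew_mod Theta a g) b) g = skew_mod Theta (smul a b) g.
Proof.
move=> mg cg a b; apply: eq_skew_mod => //; rewrite -skew_mulBl -opprB skew_mulNl.
by apply/skew_rdvdN/skew_rdvd_mulr => //; apply: skew_rdvd_sub_mod.
Qed.

Section SkewCRT.
Variables (n : nat) (gs t : 'I_n -> {poly R}).
Hypotheses (gs_monic : forall i, gs i \is monic) (gs_qcentral : forall i, qcentral (gs i)).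
Hypothesis gs_nonconst : forall i, (1 < size (gs i))%N.
Local Notation G := (\prod_(i < n) gs i).
Local Notation cof i := (\prod_(j < n | j != i) gs j).
Hypothesis bezout : \sum_i t i * cof i = 1.
Local Notation smod f g := (skew_mod Theta f g).

Lemma prod_monic : G \is monic.
Proof. exact: monic_prod. Qed.

Lemma prod_qcentral : qcentral G.
Proof. exact: qcentral_prod. Qed.

Lemma prod_cofE i : G = cof i * gs i.
Proof. by rewrite (bigD1 i) //= mulrC. Qed.

Lemma size_gs_le_prod i : (size (gs i) <= size G)%N.
Proof.
have cof_monic : cof i \is monic by apply: monic_prod.
rewrite (prod_cofE i) size_Mmonic ?monic_neq0 //.
by move: (size_monic_gt0 cof_monic); set a := size (cof i); set b := size (gs i); lia.
Qed.

Lemma skew_rdvd_prod_gs i f : skew_rdvd G f -> skew_rdvd (gs i) f.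
Proof.
move/(skew_rdvd_qcentralE prod_qcentral) => [h ->].
apply/(skew_rdvd_qcentralE (gs_qcentral i)).
by exists (h * cof i); rewrite (prod_cofE i) mulrA.
Qed.

Lemma skew_rdvd_prod f : (forall i, skew_rdvd (gs i) f) -> skew_rdvd G f.
Proof.
move=> dvd_f; have -> : f = \sum_i f * (t i * cof i) by rewrite -mulr_sumr bezout mulr1.
apply: skew_rdvd_sum => i _.
have /(skew_rdvd_qcentralE (gs_qcentral i)) [h ->] := dvd_f i.
by apply/(skew_rdvd_qcentralE prod_qcentral); exists (h * t i); rewrite (prod_cofE i); ring.
Qed.

Lemma skew_mod_prod_gs a i : smod (smod a G) (gs i) = smod a (gs i).
Proof.
apply/eq_skew_mod/skew_rdvd_prod_gs => //; rewrite -opprB.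
exact/skew_rdvdN/skew_rdvd_sub_mod/prod_monic.
Qed.

Lemma skew_mod_idem_neq i j : i != j -> smod (t i * cof i) (gs j) = 0.
Proof.
move=> neq_ij; apply: skew_modE; rewrite ?size_poly0 ?size_monic_gt0 // subr0.
apply/(skew_rdvd_qcentralE (gs_qcentral j)); rewrite (bigD1 j) 1?eq_sym //=.
by eexists; rewrite mulrCA mulrC.
Qed.

Lemma skew_mod_idem_eq i : smod (t i * cof i) (gs i) = 1.
Proof.
apply: skew_modE; rewrite ?size_poly1 //.
rewrite -[X in _ - X]bezout [\sum_i _](bigD1 i) //= opprD addrA subrr sub0r.
apply/skew_rdvdN/skew_rdvd_sum.
move=> j neq_ji; apply/(skew_rdvd_qcentralE (gs_qcentral i)).
by rewrite (bigD1 i) 1?eq_sym //=; eexists; rewrite mulrCA mulrC.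
Qed.

Definition crt_lift (bs : 'I_n -> {poly R}) := \sum_i skew_mul Theta (t i * cof i) (bs i).

Lemma skew_mod_crt_lift bs i : smod (crt_lift bs) (gs i) = smod (bs i) (gs i).
Proof.
rewrite /crt_lift (skew_mod_sum (gs_monic i)) (bigD1 i) //= [X in _ + X]big1.
  by rewrite -(skew_mod_mulml (gs_monic i) (gs_qcentral i)) skew_mod_idem_eq skew_mul1l addr0.
move=> j neq_ji; rewrite -(skew_mod_mulml (gs_monic i) (gs_qcentral i)).
by rewrite skew_mod_idem_neq // skew_mul0l skew_mod0.
Qed.

Lemma skew_mod_prod_inj a b : (size a < size G)%N -> (size b < size G)%N ->
  (forall i, smod a (gs i) = smod b (gs i)) -> a = b.
Proof.
move=> lt_a lt_b eq_ab; apply/eqP; rewrite -subr_eq0; apply/eqP.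
apply: (skew_rdvd_small prod_monic).
  by apply: skew_rdvd_prod => i; apply: skew_rdvd_eq_mod.
by rewrite (leq_ltn_trans (size_polyD _ _)) // size_polyN gtn_max lt_a.
Qed.

Lemma skew_crt_iso_prod : skew_crt_iso Theta G gs.
Proof.
split=> [a i | | bs lt_bs | | a b i].
- exact: skew_mod_prod_gs.
- exact: skew_mod_prod_inj.
- exists (smod (crt_lift bs) G); first exact: (size_skew_mod prod_monic).
  by move=> i; rewrite skew_mod_prod_gs skew_mod_crt_lift skew_mod_small.
- by split=> [a b i|i]; rewrite (skew_modD, skew_mod_small) ?size_poly1.
- by rewrite skew_mod_prod_gs skew_mod_mulmr // skew_mod_mulml.
Qed.

Section CodeDecomposition.
Variable C : {poly R} -> Prop.
Hypothesis C_ideal : skew_left_ideal Theta G C.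

Definition code_component i b := exists2 c, C c & smod c (gs i) = b.

Lemma code_component_ideal i : skew_left_ideal Theta (gs i) (code_component i).
Proof.
case: C_ideal => _ C0 CD CN CM; split.
- by move=> _ [c _ <-]; apply: size_skew_mod.
- by exists 0; rewrite ?skew_mod0.
- by move=> _ _ [c Cc <-] [d Cd <-]; exists (c + d); rewrite ?skew_modD //; apply: CD.
- by move=> _ [c Cc <-]; exists (- c); rewrite ?skew_modN //; apply: CN.
move=> a _ lt_a [c Cc <-]; exists (smod (skew_mul Theta a c) G).
  by apply: CM => //; apply: leq_trans lt_a (size_gs_le_prod i).
by rewrite skew_mod_prod_gs skew_mod_mulmr.
Qed.

Lemma code_decomposition c : (size c < size G)%N ->
  C c <-> forall i, code_component i (smod c (gs i)).
Proof.
case: C_ideal => _ C0 CD _ CM lt_c; split=> [Cc i | comp_c]; first by exists c.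
have [cs Ccs eq_cs] := fin_all_exists2 comp_c.
suff <- : smod (crt_lift cs) G = c.
  rewrite (skew_mod_sum prod_monic); apply: big_ind => // i _.
  rewrite -(skew_mod_mulml prod_monic prod_qcentral).
  exact/CM/Ccs/size_skew_mod/prod_monic.
apply: skew_mod_prod_inj => // [|i]; first exact: (size_skew_mod prod_monic).
by rewrite skew_mod_prod_gs skew_mod_crt_lift.
Qed.

End CodeDecomposition.
End SkewCRT.
End CentralPolynomials.

End SkewPolynomials.

(** * Irreducibility over a truncated polynomial ring *)

Lemma size_Xn_addl (S : nzRingType) n (a : {poly S}) : (size a <= n)%N ->
  size ('X^n + a) = n.+1.
Proof. by move=> le_a; rewrite size_polyDl size_polyXn. Qed.

Lemma monic_Xn_addl (S : nzRingType) n (a : {poly S}) : (size a <= n)%N ->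
  'X^n + a \is monic.
Proof. by move=> le_a; rewrite monicE lead_coefDl ?lead_coefXn ?size_polyXn. Qed.

Lemma unit_addr_nilpotent (S : comNzRingType) (u v N : S) k :
  u * v = 1 -> N ^+ k = 0 -> exists w, (u + N) * w = 1.
Proof.
move=> uv1 Nk0; set M := N * v.
have Mk0 : (- M) ^+ k = 0 by rewrite exprNn exprMn Nk0 mul0r mulr0.
exists (v * \sum_(i < k) (- M) ^+ i).
have := subrX1 (- M) k; rewrite Mk0 sub0r => geom.
by rewrite mulrA mulrDl uv1; apply: oppr_inj; rewrite geom /M; ring.
Qed.

Section ResidueIrreducibility.
Variables (R : comNzRingType) (F : fieldType) (red : {rmorphism R -> F}).
Hypothesis unit_of_red_const : forall (g : {poly R}) (c : F),
  c != 0 -> map_poly red g = c%:P -> Defs.poly_unit g.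

Lemma poly_irreducible_red (f : {poly R}) : size (map_poly red f) = 3 ->
  (forall x, ~~ root (map_poly red f) x) -> poly_irreducible f.
Proof.
move=> size_f no_root; set rf := map_poly red f in size_f no_root.
have nz_rf : rf != 0 by rewrite -size_poly_eq0 size_f.
split.
- by apply: contra_neq nz_rf => f0; rewrite /rf f0 map_poly0.
- move=> [g fg1]; have := congr1 (map_poly red) fg1; rewrite rmorphM rmorph1 /= => rfg1.
  have nz_rg : map_poly red g != 0.
    by apply/eqP => rg0; move: rfg1; rewrite rg0 mulr0 => /eqP; rewrite eq_sym oner_eq0.
  have := congr1 (fun p : {poly F} => size p) rfg1; rewrite size_mul // size_f size_poly1.
  by move: nz_rg; rewrite -size_poly_eq0; case: (size _).
move=> g h def_f.
have rfgh : rf = map_poly red g * map_poly red h by rewrite /rf def_f rmorphM.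
have nz_g : map_poly red g != 0 by apply: contra_neq nz_rf => rg0; rewrite rfgh rg0 mul0r.
have nz_h : map_poly red h != 0 by apply: contra_neq nz_rf => rh0; rewrite rfgh rh0 mulr0.
have := congr1 (fun p : {poly F} => size p) rfgh; rewrite size_mul // size_f.
have [/size_poly1P [c nz_c rgc] _ | ng1] := boolP (size (map_poly red g) == 1)%N.
  by left; apply: unit_of_red_const nz_c rgc.
have [/size_poly1P [c nz_c rhc] _ | nh1] := boolP (size (map_poly red h) == 1)%N.
  by right; apply: unit_of_red_const nz_c rhc.
move=> size_gh; have size_g : size (map_poly red g) = 2.
  move: size_gh ng1 nh1 nz_g nz_h; rewrite -!size_poly_eq0.
  set a := size (map_poly red g); set b := size (map_poly red h); lia.
have [x rgx] := poly2_root size_g.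
by have := no_root x; rewrite rfgh rootM rgx.
Qed.

End ResidueIrreducibility.

Section TruncatedPolynomialResidue.
Variables (k : nat) (F : fieldType) (R : comNzRingType).
Variable phi : {rmorphism {poly F} -> R}.
Hypotheses (k_gt0 : (0 < k)%N) (phi_surj : forall r : R, exists f, phi f = r).
Hypothesis phi_ker : forall f, phi f = 0 <-> 'X^k %| f.

Local Notation u := (phi 'X).

Lemma u_nilpotent : u ^+ k = 0.
Proof. by rewrite -rmorphXn; apply/phi_ker; apply: dvdpp. Qed.

Lemma phi_surjb r : exists f, phi f == r.
Proof. by have [f <-] := phi_surj r; exists f. Qed.

Definition phi_preimage r := xchoose (phi_surjb r).

Lemma phi_preimageK r : phi (phi_preimage r) = r.
Proof. exact/eqP/(xchooseP (phi_surjb r)). Qed.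

(* The residue map of the local ring R = F[u]/(u^k) onto its residue field F. *)
Definition residue (r : R) : F := (phi_preimage r).[0].

Lemma residue_phi f : residue (phi f) = f.[0].
Proof.
apply/eqP; rewrite -subr_eq0 -hornerN -hornerD; apply/eqP.
have /phi_ker/dvdpP [h ->] : phi (phi_preimage (phi f) - f) = 0.
  by rewrite rmorphB phi_preimageK subrr.
by rewrite hornerM hornerXn expr0n gtn_eqF // mulr0.
Qed.

Fact residue_is_zmod_morphism : GRing.zmod_morphism residue.
Proof.
move=> x y; rewrite -[x]phi_preimageK -[y]phi_preimageK -rmorphB !residue_phi.
by rewrite hornerD hornerN.
Qed.

Fact residue_is_monoid_morphism : GRing.monoid_morphism residue.
Proof.
split=> [|x y]; first by rewrite -(rmorph1 phi) residue_phi hornerC.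
by rewrite -[x]phi_preimageK -[y]phi_preimageK -rmorphM !residue_phi hornerM.
Qed.

HB.instance Definition _ := GRing.isZmodMorphism.Build R F residue
  residue_is_zmod_morphism.
HB.instance Definition _ := GRing.isMonoidMorphism.Build R F residue
  residue_is_monoid_morphism.

Lemma residue_decomp r : r = phi (residue r)%:P + u * phi (drop_poly 1 (phi_preimage r)).
Proof.
rewrite -{1}(phi_preimageK r) -[phi_preimage r in LHS](poly_take_drop 1).
rewrite rmorphD rmorphM expr1 mulrC; congr (phi _ + _).
by apply/polyP => i; rewrite coef_take_poly coefC /residue horner_coef0; case: i.
Qed.

Lemma unit_of_residue_const (g : {poly R}) (c : F) :
  c != 0 -> map_poly residue g = c%:P -> Defs.poly_unit g.
Proof.
move=> nz_c res_g; set B := \poly_(i < size g) phi (drop_poly 1 (phi_preimage g`_i)).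
have def_g : g = (phi c%:P)%:P + u%:P * B.
  apply/polyP => i; rewrite coefD coefC coefCM coef_poly.
  have := congr1 (fun p : {poly F} => p`_i) res_g; rewrite coef_map /= coefC => res_gi.
  case: ltnP => lt_i.
    by rewrite {1}[g`_i]residue_decomp res_gi; case: (i == 0)%N; rewrite ?rmorph0.
  move: res_gi; rewrite nth_default // rmorph0 mulr0 addr0.
  by case: (i == 0)%N => // c0; move: nz_c; rewrite -c0 eqxx.
rewrite /Defs.poly_unit {}def_g; apply: (@unit_addr_nilpotent _ _ (phi c^-1%:P)%:P _ k).
  by rewrite -polyCM -rmorphM -polyCM mulfV // rmorph1.
by rewrite exprMn -polyC_exp u_nilpotent mul0r.
Qed.

Lemma poly_irreducible_quadratic (b : int) :
  (forall x : F, x ^+ 2 + b%:~R * x + 1 != 0) ->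
  poly_irreducible ('X^2 + b%:~R *: 'X + 1 : {poly R}).
Proof.
have map_quad : map_poly residue ('X^2 + b%:~R *: 'X + 1) = 'X^2 + b%:~R *: 'X + 1.
  by rewrite !rmorphD /= map_polyXn map_polyZ map_polyX rmorph1 rmorph_int.
move=> no_root; apply: (poly_irreducible_red unit_of_residue_const); rewrite map_quad.
  rewrite -addrA size_Xn_addl // (leq_trans (size_polyD _ _)) // size_poly1 geq_max andbT.
  by rewrite (leq_trans (size_scale_leq _ _)) ?size_polyX.
by move=> x; rewrite /root !hornerE.
Qed.

End TruncatedPolynomialResidue.

Lemma expn_odd_mod6 p m : (p %% 6 = 5)%N -> odd m -> (p ^ m %% 6 = 5)%N.
Proof.
move=> p6 odd_m; rewrite -modnXm p6 -(odd_double_half m) odd_m.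
by elim: m./2 => // j IH; rewrite doubleS !addnS 2!expnS mulnA -modnMm IH.
Qed.

Lemma finField_sixth_root (F : finFieldType) (a : F) :
  (#|F| %% 6 = 5)%N -> a ^+ 6 = 1 -> a ^+ 2 = 1.
Proof.
move=> F6 a6; have nz_a : a != 0.
  by apply/eqP => a0; move: a6; rewrite a0 expr0n /= => /eqP; rewrite eq_sym oner_eq0.
have a5 : a ^+ 5 = a.
  by rewrite -{2}(expf_card a) (divn_eq #|F| 6) F6 exprD mulnC exprM a6 expr1n mul1r.
have a4 : a ^+ 4 = 1 by apply: (mulfI nz_a); rewrite -exprS a5 mulr1.
by rewrite -a6 (exprD _ 4 2) a4 mul1r.
Qed.

Lemma X2subX1_no_root (F : finFieldType) p m : prime p -> (p %% 6 = 5)%N -> odd m ->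
  #|F| = (p ^ m)%N -> forall a : F, a ^+ 2 - a + 1 != 0.
Proof.
move=> p_pr p6 odd_m cardF a; apply/negP => /eqP root_a.
have a3 : a ^+ 3 = -1.
  have : (a + 1) * (a ^+ 2 - a + 1) = a ^+ 3 + 1 by ring.
  by rewrite root_a mulr0 => /esym/eqP; rewrite addr_eq0 => /eqP.
have a2 : a ^+ 2 = 1.
  apply: finField_sixth_root; first by rewrite cardF expn_odd_mod6.
  by rewrite (exprM _ 3 2) a3 sqrrN expr1n.
have a_1 : a = -1 by rewrite -a3 exprS a2 mulr1.
have : (3%:R : F) = 0 by rewrite -root_a a2 a_1; ring.
move/eqP; rewrite -(dvdn_pcharf (card_finPcharP cardF p_pr)) => /(@dvdn_leq _ 3 isT).
by move: p6 (prime_gt1 p_pr); lia.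
Qed.

(** * The factors of x^(6 p^s) - 1 *)

Section CyclotomicFactors.
Variables (R : comNzRingType) (Theta : {rmorphism R -> R}) (p s : nat).
Hypothesis pchar_R : p \in [pchar R].
Local Notation q := (p ^ s)%N.
Local Notation y := ('X^q : {poly R}).

Lemma q_gt0 : (0 < q)%N.
Proof. by rewrite expn_gt0 prime_gt0 // (pcharf_prime pchar_R). Qed.

Lemma four_factorsE i : four_factors R q i =
  nth 0 [:: y - 1; y + 1; 'X^(2 * q) - y + 1; 'X^(2 * q) + y + 1] i.
Proof.
have pchar_q : [pchar {poly R}].-nat q.
  rewrite (eq_pnat _ (pcharf_eq (rmorph_pchar polyC pchar_R))) pnatX pnat_id //.
  exact: pcharf_prime pchar_R.
case: i => [[|[|[|[|i]]]] lt_i] //=; rewrite /four_factors /=.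
- by rewrite (exprDn_pchar _ _ pchar_q) (exprNn_pchar _ pchar_q) expr1n.
- by rewrite (exprDn_pchar _ _ pchar_q) expr1n.
- by rewrite !(exprDn_pchar _ _ pchar_q) (exprNn_pchar _ pchar_q) expr1n -exprM mulnC.
- by rewrite !(exprDn_pchar _ _ pchar_q) expr1n -exprM mulnC.
Qed.

Lemma X6q_sub1_prod : 'X^(6 * q) - 1 = \prod_(i < 4) four_factors R q i.
Proof.
by rewrite !big_ord_recr big_ord0 /= !four_factorsE /= !(mulnC _ q) !exprM; ring.
Qed.

Local Notation deg i := (if (i < 2)%N then q else 2 * q)%N.

Lemma four_factors_XnD (i : 'I_4) :
  exists2 a : {poly R}, (size a <= deg i)%N & four_factors R q i = 'X^(deg i) + a.
Proof.
have le_y1 (a : {poly R}) : (size a <= q.+1)%N -> (size a <= 2 * q)%N.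
  by move: q_gt0; lia.
have size_y1 (b : {poly R}) : (size (b + 1)%R <= maxn (size b) 1)%N.
  by rewrite (leq_trans (size_polyD _ _)) // size_poly1.
rewrite four_factorsE; case: i => [[|[|[|[|i]]]] lt_i] //=.
- by exists (-1); rewrite ?size_polyN ?size_poly1 ?q_gt0.
- by exists 1; rewrite ?size_poly1 ?q_gt0.
- exists (- y + 1); rewrite ?addrA //; apply/le_y1/(leq_trans (size_y1 _)).
  by rewrite size_polyN size_polyXn geq_max leqnn.
- exists (y + 1); rewrite ?addrA //; apply/le_y1/(leq_trans (size_y1 _)).
  by rewrite size_polyXn geq_max leqnn.
Qed.

Lemma four_factors_monic i : four_factors R q i \is monic.
Proof. by have [a le_a ->] := four_factors_XnD i; apply: monic_Xn_addl. Qed.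

Lemma size_four_factors (i : 'I_4) : size (four_factors R q i) = (deg i).+1.
Proof. by have [a le_a ->] := four_factors_XnD i; apply: size_Xn_addl. Qed.

Lemma four_factors_qcentral i : qcentral Theta q (four_factors R q i).
Proof.
have cX n : qcentral Theta q 'X^(n * q) by apply/qcentralXn/dvdn_mull.
have cy : qcentral Theta q y by rewrite -[q in 'X^q]mul1n.
have c1 := qcentral1 Theta q.
rewrite four_factorsE; case: i => [[|[|[|[|i]]]] lt_i] //=.
- exact: qcentralB.
- exact: qcentralD.
- by apply: qcentralD => //; apply: qcentralB.
- by apply: qcentralD => //; apply: qcentralD.
Qed.

(* Bezout coefficients for y - 1, y + 1, y^2 - y + 1, y^2 + y + 1, where w = 1/6. *)
Definition four_coefs (w : R) (i : 'I_4) : {poly R} :=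
  nth 0 [:: w%:P; - w%:P; (y - 2%:R) * w%:P; - (y + 2%:R) * w%:P] i.

Lemma four_factors_bezout w : 6%:R * w = 1 ->
  \sum_i four_coefs w i * \prod_(j < 4 | j != i) four_factors R q j = 1.
Proof.
move=> w6; rewrite !big_ord_recr big_ord0 /= add0r.
rewrite !(big_mkcond (fun j : 'I_4 => j != _)) !big_ord_recr !big_ord0 /=.
rewrite /four_coefs !four_factorsE /= mulnC exprM.
by transitivity ((6%:R * w)%:P); [rewrite polyCM polyC_natr; ring | rewrite w6].
Qed.

Lemma size_four_factors_gt1 i : (1 < size (four_factors R q i))%N.
Proof. by rewrite size_four_factors ltnS; case: ifP; rewrite ?muln_gt0 q_gt0. Qed.

Hypothesis theta_iter_q : forall x, theta_iter Theta q x = x.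
Variable w : R.
Hypothesis w6 : 6%:R * w = 1.

Lemma skew_crt_iso_X6q_sub1 : skew_crt_iso Theta ('X^(6 * q) - 1) (four_factors R q).
Proof.
have := skew_crt_iso_prod theta_iter_q four_factors_monic
  four_factors_qcentral size_four_factors_gt1 (four_factors_bezout w6).
by rewrite X6q_sub1_prod.
Qed.

Lemma skew_cyclic_code_components C : skew_cyclic_code Theta (6 * q) C ->
  (forall i, skew_polycyclic_code Theta (four_factors R q i) (deg i)
               (code_component Theta (four_factors R q) C i))
  /\ (forall c : {poly R}, (size c <= 6 * q)%N -> C c <->
        forall i, code_component Theta (four_factors R q) C i
                    (skew_mod Theta c (four_factors R q i))).
Proof.
case=> _ size_G _; rewrite polyC1 X6q_sub1_prod => C_ideal; split=> [i | c le_c].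
  split; [exact: four_factors_monic | exact: size_four_factors | |].
    exact (skew_central_qcentral theta_iter_q (four_factors_qcentral i)).
  exact (code_component_ideal four_factors_monic four_factors_qcentral C_ideal i).
have := code_decomposition theta_iter_q four_factors_monic four_factors_qcentral
  size_four_factors_gt1 (four_factors_bezout w6) C_ideal; apply.
by rewrite -X6q_sub1_prod -polyC1 size_G.
Qed.

Lemma skew_cyclic_code_decomposition C : skew_cyclic_code Theta (6 * q) C ->
  exists C1 C2 C3 C4 : {poly R} -> Prop,
    [/\ skew_cyclic_code Theta q C1,
        skew_negacyclic_code Theta q C2,
        skew_polycyclic_code Theta ('X^(2 * q) - y + 1) (2 * q) C3,
        skew_polycyclic_code Theta ('X^(2 * q) + y + 1) (2 * q) C4
      & forall c : {poly R}, (size c <= 6 * q)%N ->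
          (C c <-> [/\ C1 (skew_mod Theta c (y - 1)), C2 (skew_mod Theta c (y + 1)),
                      C3 (skew_mod Theta c ('X^(2 * q) - y + 1))
                    & C4 (skew_mod Theta c ('X^(2 * q) + y + 1))])].
Proof.
move=> codeC; have [comps decomp] := skew_cyclic_code_components codeC.
set Ci := code_component Theta (four_factors R q) C.
exists (Ci 0), (Ci 1), (Ci 2), (Ci 3); split.
- by have := comps 0; rewrite /skew_cyclic_code /skew_constacyclic_code polyC1 four_factorsE.
- have := comps 1; rewrite /skew_negacyclic_code /skew_constacyclic_code.
  by rewrite polyCN polyC1 opprK four_factorsE.
- by have := comps 2; rewrite four_factorsE.
- by have := comps 3; rewrite four_factorsE.
move=> c le_c; rewrite decomp //; split=> [Cc | [C0 C1 C2 C3] [[|[|[|[|i]]]] lt_i]].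
  by split; [have := Cc 0 | have := Cc 1 | have := Cc 2 | have := Cc 3]; rewrite four_factorsE.
all: by rewrite four_factorsE.
Qed.

End CyclotomicFactors.

Lemma natr6_neq0 (F : fieldType) p : p \in [pchar F] -> (p %% 6 = 5)%N -> (6%:R : F) != 0.
Proof.
move=> pchar_F p6; rewrite -(dvdn_pcharf pchar_F); apply/negP => dvd_p6.
have p5 : p = 5 by move: p6 (@dvdn_leq _ 6 isT dvd_p6); lia.
by rewrite p5 in dvd_p6.
Qed.

Theorem mainTheorem16
  (p m s k : nat) (F : finFieldType) (R : comNzRingType)
  (phi : {rmorphism {poly F} -> R}) (Theta : {rmorphism R -> R}) :
  prime p -> (p %% 6 = 5)%N -> odd m -> (#|F| = p ^ m)%N ->
  (0 < k)%N ->
  (* R = R_k = F_{p^m}[u]/<u^k>, presented via phi : F[u] ->> R with kernel <u^k> *)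
  (forall r : R, exists f : {poly F}, phi f = r) ->
  (forall f : {poly F}, phi f = 0 <-> 'X^k %| f) ->
  (* Theta is a ring automorphism of R whose order divides p^s *)
  bijective Theta ->
  (forall r : R, iter (p ^ s) Theta r = r) ->
  [/\ poly_irreducible ('X^2 - 'X + 1 : {poly R}),
      poly_irreducible ('X^2 + 'X + 1 : {poly R}),
      ('X^(6 * p ^ s) - 1 : {poly R})
        = ('X - 1) ^+ (p ^ s) * ('X + 1) ^+ (p ^ s)
          * ('X^2 - 'X + 1) ^+ (p ^ s) * ('X^2 + 'X + 1) ^+ (p ^ s),
      skew_crt_iso Theta ('X^(6 * p ^ s) - 1) (@four_factors R (p ^ s))
    & forall C : {poly R} -> Prop,
        skew_cyclic_code Theta (6 * p ^ s) C ->
        exists C1 C2 C3 C4 : {poly R} -> Prop,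
          [/\ skew_cyclic_code Theta (p ^ s) C1,
              skew_negacyclic_code Theta (p ^ s) C2,
              skew_polycyclic_code Theta ('X^(2 * p ^ s) - 'X^(p ^ s) + 1)
                (2 * p ^ s) C3,
              skew_polycyclic_code Theta ('X^(2 * p ^ s) + 'X^(p ^ s) + 1)
                (2 * p ^ s) C4
            & forall c : {poly R}, (size c <= 6 * p ^ s)%N ->
                (C c <->
                 [/\ C1 (skew_mod Theta c ('X^(p ^ s) - 1)),
                     C2 (skew_mod Theta c ('X^(p ^ s) + 1)),
                     C3 (skew_mod Theta c ('X^(2 * p ^ s) - 'X^(p ^ s) + 1))
                   & C4 (skew_mod Theta c ('X^(2 * p ^ s) + 'X^(p ^ s) + 1))])]].
Proof.
move=> p_pr p6 odd_m cardF k_gt0 phi_surj phi_ker _ theta_q.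
have no_root := X2subX1_no_root p_pr p6 odd_m cardF.
have pchar_F : p \in [pchar F] := card_finPcharP cardF p_pr.
have pchar_R : p \in [pchar R] := rmorph_pchar phi (rmorph_pchar polyC pchar_F).
have irr_quad := poly_irreducible_quadratic k_gt0 phi_surj phi_ker.
have w6 : 6%:R * phi (6%:R^-1)%:P = 1.
  rewrite -(rmorph_nat phi) -polyC_natr -rmorphM -polyCM.
  by rewrite mulfV ?rmorph1 ?(natr6_neq0 pchar_F p6).
split.
- by have := irr_quad (-1); rewrite mulrN1z scaleN1r; apply=> x; rewrite mulN1r.
- have := irr_quad 1; rewrite mulr1z scale1r; apply=> x.
  by have := no_root (- x); rewrite sqrrN opprK mul1r.
- by have := X6q_sub1_prod s pchar_R; rewrite !big_ord_recr big_ord0 /= mul1r.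
- exact (skew_crt_iso_X6q_sub1 pchar_R theta_q w6).
- exact (skew_cyclic_code_decomposition pchar_R theta_q w6).
Qed.
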